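(* Let $\mathbf{k}$ be a field, $p\ge3$ and $q\ge1$ integers, $S=\mathbf{k}[e_1,\dots,e_{qp}]$, and in $S[t]$ let $f_0=t^q+e_pt^{q-1}+e_{2p}t^{q-2}+\cdots+e_{qp}$ and $f_k=e_kt^{q-1}+e_{p+k}t^{q-2}+\cdots+e_{(q-1)p+k}$ for $1\le k\le p-1$. Let $I=\langle f_0,\dots,f_{p-1}\rangle\cap S$, and let $J$ be the ideal of $S$ generated by the maximal ($(2q-1)\times(2q-1)$) minors of the matrix $A$ defined below. Then $\sqrt{J}\subseteq\sqrt{I}$. Moreover, when $p$ is prime and $\mathbf{k}=\mathbb{F}_p$, $\sqrt{J}\subseteq I$.
   Context: Set $e_0=1$. $A=[A_0\ A_1\ \cdots\ A_{p-1}]$ is the $(2q-1)\times((q-1)+(p-1)q)$ block matrix where $A_0$ is the $(2q-1)\times(q-1)$ matrix with $(a,c)$ entry $e_{(a-c)p}$ if $0\le a-c\le q$ and $0$ otherwise, and for $1\le i\le p-1$, $A_i$ is the $(2q-1)\times q$ matrix with $(a,c)$ entry $e_{(a-c)p+i}$ if $0\le a-c\le q-1$ and $0$ otherwise. (Thus $[A_0\ A_i]$ is the Sylvester matrix of $f_0$ and $f_i$.) *)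

From HB Require Import structures.
From mathcomp Require Import all_boot all_order all_algebra.
From mathcomp Require Import mpoly.
Set Implicit Arguments. Unset Strict Implicit. Unset Printing Implicit Defensive.
Import Order.TTheory GRing.Theory.
Local Open Scope ring_scope.

Section Defs.
Variables (k : fieldType) (p q : nat).

(* S = k[e_1, ..., e_{qp}] ; e_j is the variable 'X_(j-1) *)
Definition S := {mpoly k[q * p]}.

Definition e (j : nat) : S :=
  if j == 0%N then 1 else
  if (insub j.-1 : option 'I_(q * p)) is Some i then 'X_i else 0.

Definition f0 : {poly S} := \sum_(j < q.+1) (e (j * p))%:P * 'X^(q - j).

Definition fk (i : nat) : {poly S} := \sum_(j < q) (e (j * p + i))%:P * 'X^(q.-1 - j).

Definition fgen (i : 'I_p) : {poly S} := if val i == 0%N then f0 else fk i.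

Definition in_I (g : S) : Prop :=
  exists c : 'I_p -> {poly S}, g%:P = \sum_(i < p) c i * fgen i.

Definition nrows := (2 * q).-1.
Definition ncols := ((q.-1) + (p.-1) * q)%N.

Definition A0ent (a c : nat) : S :=
  if ((c <= a) && (a - c <= q))%N then e ((a - c) * p) else 0.

Definition Aient (i a c : nat) : S :=
  if ((c <= a) && (a - c <= q.-1))%N then e ((a - c) * p + i) else 0.

Definition A0 : 'M[S]_(nrows, q.-1) := \matrix_(a, c) A0ent a c.

Definition Ai (i : nat) : 'M[S]_(nrows, q) := \matrix_(a, c) Aient i a c.

(* [A_1 ... A_{p-1}] : column c lies in block A_{c/q + 1}, at local column c mod q *)
Definition Arest : 'M[S]_(nrows, (p.-1) * q) :=
  \matrix_(a, c) Aient (c %/ q).+1 a (c %% q).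

Definition A : 'M[S]_(nrows, ncols) := row_mx A0 Arest.

Definition incr_cols (s : {ffun 'I_nrows -> 'I_ncols}) : bool :=
  [forall i : 'I_nrows, forall j : 'I_nrows, (i < j)%N ==> (s i < s j)%N].

Definition maxminor (s : {ffun 'I_nrows -> 'I_ncols}) : S := \det (colsub s A).

Definition in_J (g : S) : Prop :=
  exists c : {ffun 'I_nrows -> 'I_ncols} -> S,
    g = \sum_(s | incr_cols s) c s * maxminor s.

End Defs.

From HB Require Import structures.
From mathcomp Require Import all_boot all_order all_algebra.
From mathcomp Require Import mpoly zify ring.
Set Implicit Arguments. Unset Strict Implicit. Unset Printing Implicit Defensive.
Import GRing.Theory.
Local Open Scope ring_scope.

(* Substituting e_j - f_(j mod p) for each variable e_j with (q-1)p < j <= qp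
   (these e_j are exactly the constant coefficients of the f_i) gives a ring
   map Psi : S -> S[t] with g = Psi g modulo <f_0, ..., f_(p-1)>, so
   ker Psi is contained in I.  Applying Psi to the coefficients of any f_i and
   evaluating at t gives 0; since the columns of A are the coefficient vectors
   of the t^m f_i, the row (t^(2q-2), ..., t, 1) kills Psi(A), and Psi kills
   every maximal minor.  As S[t] is a domain, Psi(g^n) = 0 forces Psi g = 0:
   the radical of J lies in I itself over every field. *)

Section IdealGeneratedBy.
Variables (R : comNzRingType) (n : nat) (f : 'I_n -> R).

Definition in_ideal (x : R) := exists c : 'I_n -> R, x = \sum_(i < n) c i * f i.

Lemma in_ideal0 : in_ideal 0.
Proof. by exists (fun=> 0); rewrite big1 // => i _; rewrite mul0r. Qed.

Lemma in_idealD x y : in_ideal x -> in_ideal y -> in_ideal (x + y).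
Proof.
move=> [c ->] [d ->]; exists (fun i => c i + d i).
by rewrite -big_split; apply: eq_bigr => i _; rewrite mulrDl.
Qed.

Lemma in_idealMl a x : in_ideal x -> in_ideal (a * x).
Proof.
move=> [c ->]; exists (fun i => a * c i).
by rewrite mulr_sumr; apply: eq_bigr => i _; rewrite mulrA.
Qed.

Lemma in_ideal_gen i : in_ideal (f i).
Proof.
exists (fun j => (j == i)%:R); rewrite (bigD1 i) //= eqxx mul1r big1 ?addr0 //.
by move=> j /negbTE ->; rewrite mul0r.
Qed.

End IdealGeneratedBy.

Section MorphismsCongruentModIdeal.
Variables (R : nzRingType) (m : nat) (T : comNzRingType) (n : nat) (f : 'I_n -> T).
Variables (phi psi : {rmorphism {mpoly R[m]} -> T}).
Hypothesis phi_psiC : forall c, phi c%:MP = psi c%:MP.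
Hypothesis phi_psiX : forall i, in_ideal f (phi 'X_i - psi 'X_i).

Lemma rmorph_mpoly_congr g : in_ideal f (phi g - psi g).
Proof.
pose agree x := in_ideal f (phi x - psi x).
have agree1 : agree 1 by rewrite /agree !rmorph1 subrr; apply: in_ideal0.
have agreeM x y : agree x -> agree y -> agree (x * y).
  rewrite /agree !rmorphM => ax ay.
  have -> : phi x * phi y - psi x * psi y
            = phi y * (phi x - psi x) + psi x * (phi y - psi y) by ring.
  by apply: in_idealD; apply: in_idealMl.
elim/mpolyind: g => [|c mon g _ _ IHg]; first by rewrite !rmorph0 subr0; apply: in_ideal0.
rewrite !rmorphD opprD addrACA; apply: in_idealD => //.
rewrite -mul_mpolyC; apply: (agreeM); first by rewrite /agree phi_psiC subrr; apply: in_ideal0.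
rewrite mpolyXE_id; apply: (big_ind agree) => [//|x y|i _]; first exact: agreeM.
elim: (mon i) => [|d IH]; first by rewrite expr0.
by rewrite exprS; apply: agreeM => //; apply: phi_psiX.
Qed.

End MorphismsCongruentModIdeal.

Lemma sum_band_column (R : comPzSemiRingType) (t : R) (G : nat -> R) N c L :
  (c + L < N)%N ->
  \sum_(a < N) t ^+ (N.-1 - a) *
                (if ((c <= a) && (a - c <= L))%N then G (a - c)%N else 0)
  = t ^+ (N.-1 - (c + L)) * \sum_(j < L.+1) G j * t ^+ (L - j).
Proof.
move=> cLN.
pose F a := t ^+ (N.-1 - a) * (if ((c <= a) && (a - c <= L))%N then G (a - c)%N else 0).
rewrite -(big_mkord xpredT F) (@big_cat_nat _ _ _ c) //=; last by lia.
rewrite [X in _ + X](@big_cat_nat _ _ _ (c + L.+1)) //=; [|lia|lia].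
rewrite big_nat_cond big1 ?add0r => [|a /andP[/andP[_ ac] _]]; last first.
  by rewrite /F ifF ?mulr0 //; lia.
rewrite [X in _ + X]big_nat_cond [X in _ + X]big1 ?addr0 => [|a /andP[/andP[ca _] _]]; last first.
  by rewrite /F ifF ?mulr0 //; lia.
rewrite -{1}[c]add0n big_addn addKn big_mkord mulr_sumr.
apply: eq_bigr => j _; have := ltn_ord j => jL.
rewrite /F ifT; last by lia.
by rewrite addnK [RHS]mulrCA -exprD mulrC; congr (_ * t ^+ _); lia.
Qed.

Section Substitution.
Variables (k : fieldType) (p q : nat).
Hypotheses (p_gt0 : (0 < p)%N) (q_gt0 : (0 < q)%N).

Local Notation Sk := (S k p q).
Local Notation e := (e k p q).

Definition fgen_nat (i : nat) : {poly Sk} := if i == 0%N then f0 k p q else fk k p q i.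

(* The generator whose constant coefficient is e_j, or 0 if there is none. *)
Definition const_gen (j : nat) : {poly Sk} :=
  if (q.-1 * p < j <= q * p)%N then fgen_nat (j %% p) else 0.

Definition Psi :=
  mmap ((@polyC Sk) \o (@mpolyC (q * p) k)) (fun i => ('X_i)%:P - const_gen i.+1).

HB.instance Definition _ := GRing.RMorphism.on Psi.

Lemma in_ideal_const_gen j : in_ideal (fgen k q) (const_gen j).
Proof.
rewrite /const_gen; case: ifP => _; last exact: in_ideal0.
exact: (in_ideal_gen _ (Ordinal (ltn_pmod j p_gt0))).
Qed.

Lemma const_gen_low j : (j <= q.-1 * p)%N -> const_gen j = 0.
Proof. by move=> hj; rewrite /const_gen ifF //; lia. Qed.

Lemma const_gen_top i : (0 < i <= p)%N -> const_gen (q.-1 * p + i) = fgen_nat (i %% p).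
Proof.
move=> hi; rewrite /const_gen modnMDl ifT //.
by rewrite -(prednK q_gt0) mulSn; lia.
Qed.

Lemma const_gen_qp : const_gen (q * p) = f0 k p q.
Proof. by rewrite /const_gen modnMl ifT // leqnn andbT ltn_mul2r p_gt0; lia. Qed.

Lemma Psi_X i : Psi 'X_i = ('X_i)%:P - const_gen i.+1.
Proof. by rewrite /Psi mmapX mmap1U. Qed.

Lemma Psi_e j : Psi (e j) = (e j)%:P - const_gen j.
Proof.
rewrite /e; case: eqP => [->|/eqP j0].
  by rewrite !rmorph1 const_gen_low ?subr0.
case: insubP => [i _ vi|hn]; first by rewrite Psi_X vi prednK ?lt0n.
by rewrite rmorph0 polyC0 sub0r /const_gen ifF ?oppr0 //; move: hn; lia.
Qed.

Lemma ker_Psi_sub_I g : Psi g = 0 -> in_I g.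
Proof.
move=> Psig0; have [c gE] : in_ideal (fgen k q) (g%:P - Psi g).
  apply: (@rmorph_mpoly_congr _ _ _ _ _ polyC Psi) => [c | i] /=.
    by symmetry; apply: mmapC.
  by rewrite Psi_X opprB addrC subrK; apply: in_ideal_const_gen.
by exists c; rewrite -gE Psig0 subr0.
Qed.

Lemma Psi_f0_coefs : \sum_(j < q.+1) Psi (e (j * p)) * 'X^(q - j) = 0.
Proof.
under eq_bigr do rewrite Psi_e mulrBl.
rewrite sumrB -/(f0 k p q) big_ord_recr /= big1 => [|j _]; last first.
  by rewrite const_gen_low ?mul0r // leq_mul2r; have := ltn_ord j; lia.
by rewrite const_gen_qp subnn expr0 mulr1 add0r subrr.
Qed.

Lemma Psi_fk_coefs i : (0 < i < p)%N ->
  \sum_(j < q) Psi (e (j * p + i)) * 'X^(q.-1 - j) = 0.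
Proof.
move=> /andP[i_gt0 i_lt_p].
under eq_bigr do rewrite Psi_e mulrBl.
have q'_lt_q : (q.-1 < q)%N by rewrite prednK.
rewrite sumrB -/(fk k p q i) (bigD1 (Ordinal q'_lt_q)) //= big1 => [|j ne_j]; last first.
  have j_lt : (j < q.-1)%N.
    by have := ltn_ord j; move: ne_j; rewrite -val_eqE /=; lia.
  by rewrite const_gen_low ?mul0r //; nia.
rewrite const_gen_top ?modn_small ?(ltnW i_lt_p) ?i_gt0 //.
by rewrite /fgen_nat eqn0Ngt i_gt0 subnn expr0 mulr1 addr0 subrr.
Qed.

Definition powers_row : 'rV[{poly Sk}]_(nrows q) :=
  \row_(a < nrows q) 'X^((nrows q).-1 - a).

Lemma powers_row_A0 : powers_row *m map_mx Psi (A0 k p q) = 0.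
Proof.
apply/rowP => c; rewrite !mxE.
under eq_bigr do rewrite !mxE /A0ent (fun_if Psi) rmorph0.
rewrite (sum_band_column _ (fun j => Psi (e (j * p)))) ?Psi_f0_coefs ?mulr0 //.
by rewrite /nrows; have := ltn_ord c; lia.
Qed.

Lemma powers_row_Arest : powers_row *m map_mx Psi (Arest k p q) = 0.
Proof.
apply/rowP => c; rewrite !mxE.
under eq_bigr do rewrite !mxE /Aient (fun_if Psi) rmorph0.
rewrite (sum_band_column _ (fun j => Psi (e (j * p + (c %/ q).+1)))).
  rewrite prednK // Psi_fk_coefs ?mulr0 //.
  by have := ltn_ord c; rewrite -ltn_divLR //; move: (c %/ q)%N => x; lia.
by rewrite /nrows; have := ltn_pmod c q_gt0; move: (c %% q)%N => r; lia.
Qed.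

Lemma powers_row_A : powers_row *m map_mx Psi (A k p q) = 0.
Proof.
by rewrite /A map_row_mx mul_mx_row powers_row_A0 powers_row_Arest row_mx0.
Qed.

Lemma Psi_maxminor s : Psi (maxminor k s) = 0.
Proof.
apply/eqP; rewrite /maxminor -det_map_mx map_mxsub; apply/det0P.
exists powers_row.
  have last_row : ((nrows q).-1 < nrows q)%N by rewrite /nrows; lia.
  apply/eqP => /rowP /(_ (Ordinal last_row)); rewrite !mxE subnn expr0.
  by move/eqP; rewrite oner_eq0.
by rewrite mulmx_colsub powers_row_A; apply/matrixP => i j; rewrite !mxE.
Qed.

Lemma radical_J_sub_I (g : Sk) n : in_J (g ^+ n) -> in_I g.
Proof.
move=> [c gnE]; apply: ker_Psi_sub_I.
have : Psi (g ^+ n) = 0.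
  rewrite gnE rmorph_sum big1 // => s _.
  by rewrite rmorphM /= Psi_maxminor mulr0.
rewrite rmorphXn => /eqP; rewrite expf_eq0 => /andP[_ /eqP //].
Qed.

End Substitution.

Theorem proposition4p1 :
  (forall (k : fieldType) (p q : nat), (3 <= p)%N -> (1 <= q)%N ->
     forall g : S k p q,
       (exists n : nat, in_J (g ^+ n)) -> exists m : nat, in_I (g ^+ m)) /\
  (forall (p q : nat), prime p -> (3 <= p)%N -> (1 <= q)%N ->
     forall g : S 'F_p p q,
       (exists n : nat, in_J (g ^+ n)) -> in_I g).
Proof.
split=> [k p q hp hq g [n hJ] | p q _ hp hq g [n hJ]].
  by exists 1%N; rewrite expr1; apply: radical_J_sub_I hJ; lia.
by apply: radical_J_sub_I hJ; lia.
Qed.
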